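(* Let $k_1<k_2$ be integers with $k_1\ge 3$, and let $n$ be a positive integer. If $\nu_{k_1}(n+k_1-3)>0$, then $\nu_{k_2}(n+k_2-3)>0$.
   Context: For an integer $k\ge 3$ and a positive integer $m$, $\nu_k(m)$ denotes the number of $k$-tuples of integers $(x_1,\dots,x_k)$ with $1\le x_1\le x_2\le\dots\le x_k$ such that $x_1x_2\cdots x_k+x_1+x_2+\dots+x_k=m$. *)

From mathcomp Require Import all_boot.
Set Implicit Arguments. Unset Strict Implicit. Unset Printing Implicit Defensive.

(* Every solution has x_i <= m (since x_i <= sum <= m), so counting
   k-tuples with entries in 'I_m.+1 = {0,...,m} is exact. *)
Definition is_sol (m : nat) (s : seq nat) : bool :=
  all (fun x => 0 < x) s && sorted leq s && (\prod_(x <- s) x + \sum_(x <- s) x == m).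

Definition nu (k m : nat) : nat :=
  #|[set t : k.-tuple 'I_m.+1 | is_sol m (map val t)]|.

From mathcomp Require Import all_boot.
From mathcomp Require Import zify.

(* Prepending an entry 1 to a solution of [x_1...x_k + x_1 + ... + x_k = m]
   keeps the product, raises the sum by one and keeps the entries sorted, so
   it gives a solution with k+1 entries of the equation with value m+1.
   Iterating this k2-k1 times carries a solution for (k1, n+k1-3) to one for
   (k2, n+k2-3). *)

Lemma is_sol_le m s x : is_sol m s -> x \in s -> x <= m.
Proof.
case/andP=> _ /eqP <- xs.
by rewrite [X in _ + X](big_rem x xs) /= addnCA leq_addr.
Qed.

Lemma nu_gt0P k m : 0 < nu k m <-> exists2 s, size s = k & is_sol m s.
Proof.
split.
  case/card_gt0P=> t; rewrite inE => sol_t.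
  by exists (map val t); rewrite ?size_map ?size_tuple.
case=> s size_s sol_s; apply/card_gt0P.
exists (map_tuple (@inord m) (tcast size_s (in_tuple s))).
rewrite inE /= val_tcast /= -map_comp.
suff /eq_in_map -> : {in s, (val \o @inord m) =1 id} by rewrite map_id.
by move=> x xs /=; rewrite inordK // ltnS; exact: is_sol_le xs.
Qed.

Lemma is_sol_cons1 m s : is_sol m s -> is_sol m.+1 (1 :: s).
Proof.
case/andP=> /andP [pos_s sorted_s] /eqP sum_s.
rewrite /is_sol /= pos_s big_cons mul1n big_cons addnCA sum_s add1n eqxx.
by case: s {sum_s} pos_s sorted_s => //= x s /andP [-> _] ->.
Qed.

Lemma nu_gt0S k m : 0 < nu k m -> 0 < nu k.+1 m.+1.
Proof.
case/nu_gt0P=> s size_s sol_s; apply/nu_gt0P.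
by exists (1 :: s); rewrite /= ?size_s ?is_sol_cons1.
Qed.

Lemma nu_gt0D k m d : 0 < nu k m -> 0 < nu (k + d) (m + d).
Proof. by move=> nu_gt0; elim: d => [|d]; rewrite ?addn0 ?addnS // => /nu_gt0S. Qed.

Theorem corollary1 (k1 k2 n : nat) :
  3 <= k1 -> k1 < k2 -> 0 < n ->
  0 < nu k1 (n + k1 - 3) -> 0 < nu k2 (n + k2 - 3).
Proof.
move=> k1_ge3 lt_k12 _ /(nu_gt0D k1 _ (k2 - k1)).
have -> : n + k1 - 3 + (k2 - k1) = n + k2 - 3 by lia.
by rewrite subnKC // ltnW.
Qed.
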